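(* Let $\ell$ be a positive integer. Construct $\mathcal C^*\subseteq\mathcal C$ and the sets $\mathcal U_v$ ($v\in\mathcal C^*$) as described in the context. Then: (C1) for all distinct $v,v'\in\mathcal C^*$, $d(v,v')>2\ell\max\{d_{av}(v),d_{av}(v')\}$; (C2) for every $j\in\mathcal C$ there is $v\in\mathcal C^*$ with $d_{av}(v)\le d_{av}(j)$ and $d(v,j)\le2\ell d_{av}(j)$; (C3) $\sum_{i\in\mathcal U_v}y_i\ge1-1/\ell$ for every $v\in\mathcal C^*$; (C4) for every $v\in\mathcal C^*$, $i\in\mathcal U_v$ and $j\in\mathcal C$, $d(i,v)\le d(i,j)+2\ell d_{av}(j)$.
   Context: Setting: finite sets $\mathcal F$ (facility locations) and $\mathcal C$ (clients), a metric $d$ on $\mathcal F\cup\mathcal C$, positive integers $k,u$, and real numbers $x_{i,j}\ge0$, $y_i\ge0$ ($i\in\mathcal F$, $j\in\mathcal C$) with $\sum_{i\in\mathcal F}x_{i,j}=1$ for all $j$, $\sum_i y_i\le k$, $x_{i,j}\le y_i$ for all $i,j$, and $\sum_{j}x_{i,j}\le u y_i$ for all $i$. Let $d_{av}(j)=\sum_{i\in\mathcal F}x_{i,j}d(i,j)$. Construction of $\mathcal C^*$: start with $\mathcal C^*=\emptyset$ and $R=\mathcal C$; while $R\neq\emptyset$, choose $v\in R$ with smallest $d_{av}(v)$, add $v$ to $\mathcal C^*$, and remove from $R$ all $j\in R$ with $d(j,v)\le2\ell d_{av}(j)$ (this includes $v$). Then each location $i\in\mathcal F$ is put into $\mathcal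 U_v$ for one $v\in\mathcal C^*$ closest to $i$ (ties broken arbitrarily), so $\{\mathcal U_v\}_{v\in\mathcal C^*}$ partitions $\mathcal F$. *)

From HB Require Import structures.
From mathcomp Require Import all_boot all_order all_algebra.
Set Implicit Arguments. Unset Strict Implicit. Unset Printing Implicit Defensive.
Import Order.TTheory GRing.Theory Num.Theory.
Local Open Scope ring_scope.

Section Defs.
Variables (R : realFieldType) (T : finType).

Definition dav (F : {set T}) (x : T -> T -> R) (d : T -> T -> R) (j : T) : R :=
  \sum_(i in F) x i j * d i j.

Definition metric_on (S : {set T}) (d : T -> T -> R) : Prop :=
  [/\ {in S &, forall a b, d a b = 0 <-> a = b},
      {in S &, forall a b, 0 <= d a b},
      {in S &, forall a b, d a b = d b a} &
      {in S & &, forall a b c, d a c <= d a b + d b c}].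

(* greedy_run av d l Rem s : the greedy process started with remaining set Rem
   may choose the centres s (in that order) and terminate with R = empty. *)
Inductive greedy_run (av : T -> R) (d : T -> T -> R) (l : nat)
  : {set T} -> seq T -> Prop :=
| greedy_nil : greedy_run av d l set0 [::]
| greedy_cons (Rem : {set T}) (v : T) (s : seq T) :
    v \in Rem ->
    (forall j, j \in Rem -> av v <= av j) ->
    greedy_run av d l (Rem :\: [set j in Rem | d j v <= 2 * l%:R * av j]) s ->
    greedy_run av d l Rem (v :: s).
End Defs.

From HB Require Import structures.
From mathcomp Require Import all_boot all_order all_algebra.
From mathcomp Require Import lra.
Set Implicit Arguments. Unset Strict Implicit. Unset Printing Implicit Defensive.
Import Order.TTheory GRing.Theory Num.Theory.
Local Open Scope ring_scope.

(* A centre w chosen later than v by the greedy process survived the removal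
   step of v, so d(w, v) > 2 l av(w) while av(v) <= av(w): this is the
   separation (C1); a client is removed by a centre covering it (C2). For a
   centre v, Markov's inequality for the distribution x(., v) puts x-mass at
   least 1 - 1/l on the facilities within distance l av(v) of v, and by
   separation v is the nearest centre of each of them, so they all lie in U_v,
   where y dominates x (C3). (C4) is the triangle inequality through the
   centre covering j. *)

Section Markov.
Variables (R : realFieldType) (I : finType).

Lemma ler_sum_subset (P Q : {pred I}) (f : I -> R) :
  {subset P <= Q} -> (forall i, Q i -> 0 <= f i) ->
  \sum_(i | P i) f i <= \sum_(i | Q i) f i.
Proof.
move=> PQ f_ge0; rewrite [X in _ <= X](bigID P) /=.
rewrite (eq_bigl P) => [|i]; last by apply/andb_idl/PQ.
by rewrite lerDl sumr_ge0 // => i /andP[/f_ge0].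
Qed.

Lemma markov_mass (A : {set I}) (w f : I -> R) (c : R) :
  (forall i, i \in A -> 0 <= w i) -> (forall i, i \in A -> 0 <= f i) ->
  c * \sum_(i in A | c * \sum_(j in A) w j * f j < f i) w i <= 1.
Proof.
set m := \sum_(j in A) _; move=> w_ge0 f_ge0.
have wf_ge0 i : i \in A -> 0 <= w i * f i by move=> iA; rewrite mulr_ge0 ?w_ge0 ?f_ge0.
have tail_le : \sum_(i in A | c * m < f i) w i * f i <= m.
  by apply: ler_sum_subset => [i /andP[]//|]; apply: wf_ge0.
have [m_gt0|m_le0] := ltP 0 m.
  rewrite -(ler_pM2r m_gt0) mul1r (le_trans _ tail_le) // mulrAC mulr_sumr.
  by apply: ler_sum => i /andP[iA /ltW cm_le]; rewrite mulrC ler_wpM2l ?w_ge0.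
have m0 : m = 0 by apply/eqP; rewrite eq_le m_le0 sumr_ge0 // => i; apply: wf_ge0.
rewrite big1 ?mulr0 ?ler01 // => i /andP[iA]; rewrite m0 mulr0 => f_gt0.
have /eqP := psumr_eq0P wf_ge0 m0 iA.
by rewrite mulf_eq0 (gt_eqF f_gt0) orbF => /eqP.
Qed.
End Markov.

Section Greedy.
Variables (R : realFieldType) (T : finType) (av : T -> R) (d : T -> T -> R) (l : nat).

Lemma greedy_run_sub Rem s : greedy_run av d l Rem s -> {subset s <= Rem}.
Proof.
elim=> [//|Rm v s' vR _ _ IH] w; rewrite inE => /predU1P [-> //|/IH].
by rewrite inE => /andP[].
Qed.

Lemma greedy_run_cover Rem s : greedy_run av d l Rem s ->
  forall j, j \in Rem -> exists2 v, v \in s & av v <= av j /\ d j v <= 2 * l%:R * av j.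
Proof.
elim=> [j|Rm v s' vR v_min _ IH j jR]; first by rewrite inE.
have [j_near|j_far] := boolP (d j v <= 2 * l%:R * av j).
  by exists v; [rewrite mem_head | split => //; apply: v_min].
have [w ws w_cov] : exists2 w, w \in s' & av w <= av j /\ d j w <= 2 * l%:R * av j.
  by apply: IH; rewrite !inE jR (negbTE j_far).
by exists w; rewrite // in_cons ws orbT.
Qed.

Lemma greedy_run_sep Rem s : greedy_run av d l Rem s ->
  {in Rem &, forall a b, d a b = d b a} ->
  forall v v', v \in s -> v' \in s -> v != v' ->
    2 * l%:R * Num.max (av v) (av v') < d v v'.
Proof.
elim=> [//|Rm v s' vR v_min run' IH] d_sym.
have later_centre w : w \in s' -> av v <= av w /\ 2 * l%:R * av w < d v w.
  move=> /(greedy_run_sub run'); rewrite !inE => /andP[+ wR].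
  by rewrite wR -ltNge d_sym // (v_min _ wR) => ->.
have d_sym' : {in Rm :\: [set j in Rm | d j v <= 2 * l%:R * av j] &,
    forall a b, d a b = d b a}.
  by move=> a b /setDP[aR _] /setDP[bR _]; apply: d_sym.
move=> a b; rewrite !in_cons => /predU1P[-> | a_s'] /predU1P[-> | b_s'].
- by rewrite eqxx.
- by have [/max_idPr -> ?] := later_centre b b_s'.
- have [/max_idPl -> ?] := later_centre a a_s'; rewrite d_sym //.
  by have := greedy_run_sub run' a_s'; rewrite inE => /andP[].
- exact: IH d_sym' a b a_s' b_s'.
Qed.

End Greedy.

Section Clustering.
Variables (R : realFieldType) (T : finType) (F C : {set T}) (d : T -> T -> R).
Variables (l : nat) (x : T -> T -> R) (y : T -> R) (s : seq T) (assign : T -> T).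
Hypothesis hd : metric_on (F :|: C) d.
Hypothesis hl : (0 < l)%N.
Hypothesis hx0 : forall i j, i \in F -> j \in C -> 0 <= x i j.
Hypothesis hy0 : forall i, i \in F -> 0 <= y i.
Hypothesis hx1 : forall j, j \in C -> \sum_(i in F) x i j = 1.
Hypothesis hxy : forall i j, i \in F -> j \in C -> x i j <= y i.
Hypothesis hs : greedy_run (dav F x d) d l C s.
Hypothesis hassign : forall i, i \in F -> assign i \in s.
Hypothesis hclosest : forall i v, i \in F -> v \in s -> d i (assign i) <= d i v.

Local Notation av := (dav F x d).

Let memF i (iF : i \in F) : i \in F :|: C := subsetP (subsetUl F C) i iF.
Let memC i (iC : i \in C) : i \in F :|: C := subsetP (subsetUr F C) i iC.
Let centreC v (vs : v \in s) : v \in C := greedy_run_sub hs vs.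

Let d_ge0 : {in F :|: C &, forall a b, 0 <= d a b}. Proof. by case: hd. Qed.
Let d_sym : {in F :|: C &, forall a b, d a b = d b a}. Proof. by case: hd. Qed.
Let d_tri : {in F :|: C & &, forall a b c, d a c <= d a b + d b c}.
Proof. by case: hd. Qed.

Lemma centres_sep v v' : v \in s -> v' \in s -> v != v' ->
  2 * l%:R * Num.max (av v) (av v') < d v v'.
Proof.
apply: (greedy_run_sep hs) => a b /memC aFC /memC bFC; exact: d_sym.
Qed.

Lemma centres_cover j : j \in C ->
  exists2 v, v \in s & av v <= av j /\ d v j <= 2 * l%:R * av j.
Proof.
move=> jC; have [v vs [av_le d_le]] := greedy_run_cover hs jC.
by exists v; rewrite // (d_sym (memC (centreC vs)) (memC jC)).
Qed.

Lemma assign_near_centre v i : v \in s -> i \in F -> d i v <= l%:R * av v ->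
  assign i = v.
Proof.
move=> vs iF; set w := assign i; have ws : w \in s := hassign iF.
apply: contraTeq; rewrite eq_sym -ltNge => v_ne.
have sep := centres_sep vs ws v_ne.
have closest := hclosest iF vs.
have tri := d_tri (memC (centreC vs)) (memF iF) (memC (centreC ws)).
have d_vi : d v i = d i v := d_sym (memC (centreC vs)) (memF iF).
have : l%:R * av v <= l%:R * Num.max (av v) (av w).
  by rewrite ler_wpM2l ?ler0n // le_max lexx.
lra.
Qed.

Lemma cluster_weight v : v \in s ->
  1 - 1 / l%:R <= \sum_(i in [set i in F | assign i == v]) y i.
Proof.
move=> vs; have vC := centreC vs.
set far := fun i => l%:R * av v < d i v.
have far_mass : l%:R * \sum_(i in F | far i) x i v <= 1.
  apply: (markov_mass (A := F) (w := x^~ v) (f := d^~ v)) => i iF; first exact: hx0.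
  exact: d_ge0 (memF iF) (memC vC).
have near_mass : \sum_(i in F | ~~ far i) x i v = 1 - \sum_(i in F | far i) x i v.
  by have := hx1 vC; rewrite (bigID far) /=; lra.
have far_le : \sum_(i in F | far i) x i v <= 1 / l%:R.
  by rewrite ler_pdivlMr ?ltr0n // mulrC.
have near_le : \sum_(i in F | ~~ far i) x i v <= \sum_(i in F | ~~ far i) y i.
  by apply: ler_sum => i /andP[iF _]; apply: hxy.
have near_sub : \sum_(i in F | ~~ far i) y i <=
                \sum_(i in [set i in F | assign i == v]) y i.
  apply: ler_sum_subset => [i /andP[iF i_near] | i]; last by rewrite inE => /andP[/hy0].
  by rewrite inE iF (assign_near_centre vs iF) ?eqxx // leNgt.
lra.
Qed.

Lemma assign_dist i j : i \in F -> j \in C ->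
  d i (assign i) <= d i j + 2 * l%:R * av j.
Proof.
move=> iF jC; have [w ws [_ d_wj]] := centres_cover jC.
have := hclosest iF ws.
have := d_tri (memF iF) (memC jC) (memC (centreC ws)).
have := d_sym (memC jC) (memC (centreC ws)).
lra.
Qed.

End Clustering.

Theorem claim2 (R : realFieldType) (T : finType) (F C : {set T})
  (d : T -> T -> R) (k u l : nat) (x : T -> T -> R) (y : T -> R)
  (hd : metric_on (F :|: C) d)
  (hk : (0 < k)%N) (hu : (0 < u)%N) (hl : (0 < l)%N)
  (hx0 : forall i j, i \in F -> j \in C -> 0 <= x i j)
  (hy0 : forall i, i \in F -> 0 <= y i)
  (hx1 : forall j, j \in C -> \sum_(i in F) x i j = 1)
  (hyk : \sum_(i in F) y i <= k%:R)
  (hxy : forall i j, i \in F -> j \in C -> x i j <= y i)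
  (hcap : forall i, i \in F -> \sum_(j in C) x i j <= u%:R * y i)
  (s : seq T) (hs : greedy_run (dav F x d) d l C s)
  (assign : T -> T)
  (hassign : forall i, i \in F -> assign i \in s)
  (hclosest : forall i v, i \in F -> v \in s -> d i (assign i) <= d i v) :
  let Cstar := [set v in s] in
  let U := fun v => [set i in F | assign i == v] in
  let av := dav F x d in
  [/\ (forall v v', v \in Cstar -> v' \in Cstar -> v != v' ->
         2 * l%:R * Num.max (av v) (av v') < d v v'),
      (forall j, j \in C -> exists2 v, v \in Cstar &
         av v <= av j /\ d v j <= 2 * l%:R * av j),
      (forall v, v \in Cstar -> 1 - 1 / l%:R <= \sum_(i in U v) y i) &
      (forall v i j, v \in Cstar -> i \in U v -> j \in C ->
         d i v <= d i j + 2 * l%:R * av j)].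
Proof.
move=> Cstar U av; split.
- by move=> v v'; rewrite !inE; exact: (centres_sep hd hs).
- move=> j /(centres_cover hd hs) [v vs cov].
  by exists v; rewrite ?inE.
- move=> v; rewrite inE /U.
  exact: (cluster_weight hd hl hx0 hy0 hx1 hxy hs hassign hclosest).
- move=> v i j _; rewrite /U inE => /andP[iF /eqP <-] jC.
  exact: (assign_dist hd hs hclosest iF jC).
Qed.
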